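(* Assume the distribution $\mathcal D_2(\lambda)$ defined in the context. Let $G\in\mathcal G_{d,k}$ be a structure in which at least one of $X_a,X_b$ has children other than $X_a,X_b$. Then $\mathcal S(G)<\mathcal S^*-\beta+3d\lambda$.
   Context: Entropies use the natural logarithm; $k$ is a fixed positive integer. For a set of variables, a family is $\langle Y,\Pi\rangle$ with $\Pi$ not containing $Y$ and $|\Pi|\le k$, with $H(\langle Y,\Pi\rangle)=H(Y\mid\Pi)$; DAGs are identified with their sets of families and have score $\mathcal S(G)=-\sum_{f\in G}H(f)$. Markov-equivalent DAGs form equivalence classes (ECs) with a common score. Construction. $\mathcal D_1$ is a distribution over a finite set $\mathbf X_1$ of at least $k$ discrete variables, containing a variable $X_a$, such that for some $\alpha,\beta>0$: (I) among DAGs over $\mathbf X_1$ with in-degree $\le k$ there is a unique optimal EC, with score gap at least $\beta$ to the next-best EC; (II) $X_a$ has no children in any structure of the optimal EC; (III) $H(X_a\mid\mathbf X_1\setminus\{X_a\})=\alpha$. Let $\mathbf X=\mathbf X_1\cup\{X_b\}$, $d=|\mathbf X|$. For $\lambda\in(0,\min(\alpha,\beta/(3d)))$, $\mathcal D_2(\lambda)$ is a distribution on $\mathbf X$ with marginal $\mathcal D_1$ on $\mathbf X_1$ such that: (IV) there is a hidden Bernoulli variable $C$ independent of $\mathbf X_1$ with $P[X_b=X_a\mid C=1]=1$ and $X_b$ independent of $\mathbf X_1$ given $C=0$; (V) $\max(H(X_b\mid X_a),H(X_a\mid X_b))=\lambda$. $\mathcal G_{d,k}$ is the set of DAGs over $\mathbf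 X$ with in-degree at most $k$, scores are computed under $\mathcal D_2(\lambda)$, and $\mathcal S^*=\max_{G\in\mathcal G_{d,k}}\mathcal S(G)$. *)

From HB Require Import structures.
From mathcomp Require Import all_boot all_order all_algebra.
From mathcomp Require Import reals exp.
Set Implicit Arguments. Unset Strict Implicit. Unset Printing Implicit Defensive.
Import Order.TTheory GRing.Theory Num.Theory.
Local Open Scope ring_scope.

(* Variables are indexed by a finite type V; every variable takes values in a
   common finite type W.  A joint distribution is a function P on the
   (finite) set of full assignments {ffun V -> W}. *)

Section Defs.
Variables (R : realType) (V W : finType).

Definition agree (A : {set V}) (x u : {ffun V -> W}) : bool :=
  [forall v in A, x v == u v].

Definition marg (P : {ffun V -> W} -> R) (A : {set V}) (x : {ffun V -> W}) : R :=
  \sum_(y | agree A y x) P y.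

Definition entropy (P : {ffun V -> W} -> R) (A : {set V}) : R :=
  - \sum_(x : {ffun V -> W}) P x * ln (marg P A x).

Definition condH (P : {ffun V -> W} -> R) (Y : V) (Pi : {set V}) : R :=
  entropy P (Y |: Pi) - entropy P Pi.

(* A structure over the variable set S is given by its parent sets g v, v in S
   (values of g outside S are irrelevant).  Edge u -> v iff u \in g v. *)
Definition edge (S : {set V}) (g : {ffun V -> {set V}}) : rel V :=
  fun u v => (v \in S) && (u \in g v).

Definition is_dag (S : {set V}) (k : nat) (g : {ffun V -> {set V}}) : bool :=
  [forall v in S, (g v \subset S :\ v) && (#|g v| <= k)%N] &&
  [forall v, forall u, edge S g u v ==> ~~ connect (edge S g) v u].

Definition score (P : {ffun V -> W} -> R) (S : {set V}) (g : {ffun V -> {set V}}) : R :=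
  - \sum_(v in S) condH P v (g v).

(* Markov equivalence (Verma--Pearl): same skeleton and same v-structures *)
Definition adj (g : {ffun V -> {set V}}) (u v : V) : bool :=
  (u \in g v) || (v \in g u).

Definition vstruct (g : {ffun V -> {set V}}) (u w v : V) : bool :=
  [&& u != w, u \in g v, w \in g v & ~~ adj g u w].

Definition markov_equiv (S : {set V}) (g1 g2 : {ffun V -> {set V}}) : Prop :=
  (forall u v, u \in S -> v \in S -> adj g1 u v = adj g2 u v) /\
  (forall u w v, u \in S -> w \in S -> v \in S -> vstruct g1 u w v = vstruct g2 u w v).

(* the empty DAG (belongs to every G_{d,k}); used only as neutral element *)
Definition empty_dag : {ffun V -> {set V}} := [ffun _ => set0].

Definition Sstar (P : {ffun V -> W} -> R) (k : nat) : R :=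
  \big[Num.max/score P setT empty_dag]_(g : {ffun V -> {set V}} | is_dag setT k g)
     score P setT g.

End Defs.

From HB Require Import structures.
From mathcomp Require Import all_boot all_order all_algebra.
From mathcomp Require Import reals exp.
From mathcomp Require Import ring lra.
Set Implicit Arguments. Unset Strict Implicit. Unset Printing Implicit Defensive.
Import Order.TTheory GRing.Theory Num.Theory.
Local Open Scope ring_scope.

(* Collapse X_b onto X_a: delete X_b, replace it by X_a in every parent set, and
   give X_a the parents of whichever of X_a, X_b comes first in a topological
   order of G.  The result G' is a structure over X_1 in G_{d-1,k} in which X_a
   has a child, so by (II) it lies outside the optimal class and
   S(G') <= S(G0) - beta by (I).  Submodularity of entropy (conditioning reduces
   entropy) and the chain rule give
     H(Y | Pi - X_b + X_a) <= H(Y | Pi) + H(X_b | X_a),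
     H(X_a | Pi) <= H(X_b | Pi) + H(X_a | X_b),
   so each family of G' costs at most lambda more than its counterpart in G
   (the one of X_a also absorbing the dropped family of X_b), and
   S(G) <= S(G') + (d-1) lambda.
   Finally G0 together with the family <X_b, {X_a}> lies in G_{d,k} and scores
   S(G0) - H(X_b | X_a) >= S(G0) - lambda, whence S(G) <= S^* - beta + d lambda. *)

Lemma divff_le1 (F : numFieldType) (t : F) : 0 <= t -> t / t <= 1.
Proof. by move=> t0; have [->|/divff ->//] := eqVneq t 0; rewrite mul0r. Qed.

Lemma ln_le_subr1 (R : realType) (t : R) : 0 < t -> ln t <= t - 1.
Proof. by move=> t0; have := @le_ln1Dx R (t - 1); rewrite addrCA subrr addr0; apply; lra. Qed.

Section Entropy.
Variables (R : realType) (V W : finType) (P : {ffun V -> W} -> R).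
Hypothesis P_ge0 : forall x, 0 <= P x.
Implicit Types (A B T Pi : {set V}) (v w a b : V) (x y z u : {ffun V -> W}).

Lemma agree_refl A x : agree A x x.
Proof. exact/forall_inP. Qed.

Lemma agree_sym A x y : agree A x y = agree A y x.
Proof. by apply/forall_inP/forall_inP => H v /H /eqP ->. Qed.

Lemma agree_trans A x y z : agree A x y -> agree A y z -> agree A x z.
Proof.
move=> /forall_inP xy /forall_inP yz; apply/forall_inP => v vA.
by rewrite (eqP (xy v vA)) yz.
Qed.

Lemma agreeS A B x y : A \subset B -> agree B x y -> agree A x y.
Proof. by move=> /subsetP AB /forall_inP xy; apply/forall_inP => v /AB /xy. Qed.

Lemma marg_ge0 A x : 0 <= marg P A x.
Proof. exact: sumr_ge0. Qed.

Lemma le_mass_marg A x : P x <= marg P A x.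
Proof. by rewrite /marg (bigD1 x) ?agree_refl //= lerDl sumr_ge0. Qed.

Lemma marg_gt0 A x : 0 < P x -> 0 < marg P A x.
Proof. by move=> Px; apply: lt_le_trans Px (le_mass_marg A x). Qed.

Lemma agree_marg A x y : agree A x y -> marg P A x = marg P A y.
Proof.
move=> xy; apply: eq_bigl => z.
by apply/idP/idP => [/agree_trans|]; [apply | move/agree_trans; apply; rewrite agree_sym].
Qed.

Lemma margS A B x : A \subset B -> marg P B x <= marg P A x.
Proof.
move=> AB; rewrite /marg [X in _ <= X](bigID (agree B ^~ x)) /=.
have -> : \sum_(y | agree A y x && agree B y x) P y = \sum_(y | agree B y x) P y.
  by apply: eq_bigl => y; case: (boolP (agree B y x)) => [/(agreeS AB)->|]; rewrite ?andbF.
by rewrite lerDl sumr_ge0.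
Qed.

Lemma entropyS A B : A \subset B -> entropy P A <= entropy P B.
Proof.
move=> AB; rewrite /entropy lerN2; apply: ler_sum => x _.
have [->|Px] := eqVneq (P x) 0; first by rewrite !mul0r.
have Px_gt0 : 0 < P x by rewrite lt_def Px P_ge0.
rewrite ler_wpM2l // ler_ln ?posrE ?marg_gt0 //; exact: margS.
Qed.

Definition glue A y z : {ffun V -> W} := [ffun v => if v \in A then y v else z v].

Lemma agree_glue A B x y z :
  agree A y x && agree B z x = agree (A :&: B) y z && agree (A :|: B) x (glue A y z).
Proof.
apply/andP/andP.
- case=> /forall_inP yx /forall_inP zx; split; apply/forall_inP => v.
    by rewrite inE => /andP[vA vB]; rewrite (eqP (yx v vA)) (eqP (zx v vB)).
  rewrite inE ffunE; case: ifP => [vA _|_ /= vB]; first by rewrite (eqP (yx v vA)).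
  by rewrite (eqP (zx v vB)).
- case=> /forall_inP yz /forall_inP xg; split; apply/forall_inP => v vS.
    by have := xg v; rewrite inE vS ffunE vS => /(_ isT) /eqP ->.
  have := xg v; rewrite inE vS orbT ffunE => /(_ isT) /eqP ->.
  by case: ifP => // vA; have := yz v; rewrite inE vA vS => /(_ isT) /eqP ->.
Qed.

Lemma sum_mass_div_marg A u : \sum_(x | agree A x u) P x / marg P A x <= 1.
Proof.
rewrite (eq_bigr (fun x => P x / marg P A u)); last by move=> x /agree_marg ->.
by rewrite -big_distrl divff_le1 ?marg_ge0.
Qed.

Lemma sum_mass_marg_ratio_le A B :
  \sum_x P x * (marg P A x * marg P B x / (marg P (A :|: B) x * marg P (A :&: B) x))
  <= \sum_x P x.
Proof.
set mU := marg P (A :|: B); set mI := marg P (A :&: B).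
(* Expand both marginals over witnesses y (for A) and z (for B) of x; such a
   pair agrees on A :&: B and pins x down on A :|: B to glue A y z. *)
pose F x y z := P y * P z / mI y * (P x / mU x).
have expand x : P x * (marg P A x * marg P B x / (mU x * mI x)) =
    \sum_y \sum_z (if agree A y x && agree B z x then F x y z else 0).
  rewrite mulrCA /marg big_distrlr big_distrl /= big_mkcond; apply: eq_bigr => y _.
  case: ifP => Ayx /=; last by rewrite big1 // => z _; rewrite Ayx.
  rewrite big_distrl /= big_mkcond; apply: eq_bigr => z _.
  case: ifP => //= _.
  rewrite /F /mI (@agree_marg _ y x) ?(agreeS (subsetIl A B)) // invfM; ring.
rewrite (eq_bigr _ (fun x _ => expand x)) exchange_big /=.
under eq_bigr do rewrite exchange_big /=.
apply: (@le_trans _ _ (\sum_y \sum_z (if agree (A :&: B) y z then P y * P z / mI y else 0))).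
  apply: ler_sum => y _; apply: ler_sum => z _.
  under eq_bigr do rewrite agree_glue.
  case: ifP => yz /=; last by rewrite big1.
  rewrite -big_mkcond /= -big_distrr /= ler_piMr ?divr_ge0 ?mulr_ge0 ?marg_ge0 //.
  exact: sum_mass_div_marg.
rewrite exchange_big /=; apply: ler_sum => z _.
rewrite -big_mkcond /= (eq_bigr (fun y => P y / mI y * P z)) => [|y _]; last by rewrite mulrAC.
rewrite -big_distrl /= ler_piMl //.
exact: sum_mass_div_marg.
Qed.

Lemma entropy_submod A B :
  entropy P (A :|: B) + entropy P (A :&: B) <= entropy P A + entropy P B.
Proof.
rewrite /entropy -!opprD lerN2 -!big_split /= -subr_ge0 -sumrB.
apply: (@le_trans _ _ (\sum_x (P x - P x *
    (marg P A x * marg P B x / (marg P (A :|: B) x * marg P (A :&: B) x))))).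
  by rewrite sumrB subr_ge0; apply: sum_mass_marg_ratio_le.
apply: ler_sum => x _.
have [->|Px] := eqVneq (P x) 0; first by rewrite !mul0r !subrr.
have Px_gt0 : 0 < P x by rewrite lt_def Px P_ge0.
have := marg_gt0 A Px_gt0; have := marg_gt0 B Px_gt0.
have := marg_gt0 (A :|: B) Px_gt0; have := marg_gt0 (A :&: B) Px_gt0.
set mA := marg P A x; set mB := marg P B x.
set mU := marg P (A :|: B) x; set mI := marg P (A :&: B) x.
move=> mI_gt0 mU_gt0 mB_gt0 mA_gt0.
have ratio_gt0 : 0 < mA * mB / (mU * mI) by rewrite !(mulr_gt0, invr_gt0).
have := ler_wpM2l (ltW Px_gt0) (ln_le_subr1 ratio_gt0).
rewrite ln_div ?lnM ?posrE ?mulr_gt0 // => le_ln; lra.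
Qed.

Lemma condH_ge0 v T : 0 <= condH P v T.
Proof. by rewrite subr_ge0 entropyS ?subsetUr. Qed.

Lemma condHS v A B : A \subset B -> condH P v B <= condH P v A.
Proof.
move=> AB; have := entropy_submod (v |: A) B.
rewrite -setUA (setUidPr AB) => submod.
have : entropy P A <= entropy P ((v |: A) :&: B) by rewrite entropyS // subsetI subsetUr.
rewrite /condH; lra.
Qed.

Lemma condH_chain v w T : condH P v T <= condH P w T + condH P v (w |: T).
Proof.
have : entropy P (v |: T) <= entropy P (v |: (w |: T)) by rewrite entropyS ?setUS ?subsetUr.
rewrite /condH; lra.
Qed.

Lemma condH_substitute v a b Pi : condH P v (a |: (Pi :\ b)) <= condH P v Pi + condH P b [set a].
Proof.
have := condH_chain v b (a |: (Pi :\ b)).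
have := condHS b (subsetUl [set a] (Pi :\ b)).
have : Pi \subset b |: (a |: (Pi :\ b)).
  by apply/subsetP => u uPi; rewrite !inE uPi andbT; case: eqVneq; rewrite ?orbT.
move/(condHS v); lra.
Qed.

Lemma condH_target_swap a b T : condH P a T <= condH P b T + condH P a [set b].
Proof. by have := condH_chain a b T; have := condHS a (subsetUl [set b] T); lra. Qed.
End Entropy.

Section Dag.
Variable V : finType.
Local Open Scope nat_scope.
Implicit Types (S pa : {set V}) (g : {ffun V -> {set V}}) (r : V -> nat) (a b u v : V).

Lemma connect_rank_le (e : rel V) r u v :
  (forall x y, e x y -> r x < r y) -> connect e u v -> r u <= r v.
Proof.
move=> e_rank /connectP [p]; elim: p u => [|w p IHp] u /=; first by move=> _ ->.
by case/andP => euw pw vE; apply: leq_trans (ltnW (e_rank _ _ euw)) (IHp _ pw vE).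
Qed.

Lemma is_dag_ranked S k g r :
  (forall v, v \in S -> (g v \subset S :\ v) && (#|g v| <= k)) ->
  (forall u v, v \in S -> u \in g v -> r u < r v) -> is_dag S k g.
Proof.
move=> families g_rank; apply/andP; split; first exact/forall_inP.
apply/forallP => v; apply/forallP => u; apply/implyP => /andP [vS uv]; apply/negP => vu.
have e_rank x y : edge S g x y -> r x < r y by case/andP => yS; apply: g_rank.
by have := connect_rank_le e_rank vu; rewrite leqNgt g_rank.
Qed.

Lemma dag_family S k g v : is_dag S k g -> v \in S -> g v \subset S :\ v /\ #|g v| <= k.
Proof. by case/andP => /forall_inP families _ /families /andP. Qed.

Lemma dag_rank S k g : is_dag S k g ->
  exists r, forall u v, v \in S -> u \in g v -> r u < r v.
Proof.
case/andP => _ /forallP acyclic.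
exists (fun v => #|[set w | connect (edge S g) w v]|) => u v vS uv.
have e_uv : edge S g u v by rewrite /edge vS uv.
apply/proper_card/properP; split.
  by apply/subsetP => w; rewrite !inE => wu; apply: connect_trans wu (connect1 e_uv).
by exists v; rewrite !inE ?connect0 //; apply: (implyP (forallP (acyclic v) u)).
Qed.

Definition collapse g a b pa : {ffun V -> {set V}} :=
  [ffun v => if v == a then pa else if b \in g v then a |: (g v :\ b) else g v].

Lemma collapse_parent g a b pa v : v != a -> (a \in g v) || (b \in g v) ->
  a \in collapse g a b pa v.
Proof.
by rewrite ffunE => /negbTE ->; case: ifP => [_ _|_]; rewrite ?setU11 ?orbF.
Qed.

Lemma collapse_is_dag k g a b r pa : a != b -> is_dag setT k g ->
  (forall u v, u \in g v -> r u < r v) ->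
  (forall u, u \in pa -> r u < minn (r a) (r b)) -> #|pa| <= k ->
  is_dag [set~ b] k (collapse g a b pa).
Proof.
move=> a_neq_b g_dag g_rank pa_rank pa_card.
have pa_neq u : u \in pa -> (u != a) && (u != b).
  move/pa_rank; rewrite leq_min => /andP [ua ub].
  by apply/andP; split; [apply: contraTneq ua | apply: contraTneq ub] => ->; rewrite ltnn.
have g_neq u v : u \in g v -> u != v by move/g_rank; apply: contraTneq => ->; rewrite ltnn.
(* a takes the place of the earlier of a and b in the order r. *)
pose r' u := if u == a then minn (r a) (r b) else r u.
apply: (is_dag_ranked (r := r')) => [v|u v]; rewrite in_setC1 ffunE => v_neq_b.
- have [-> {v v_neq_b}|v_neq_a] := eqVneq v a.
    rewrite pa_card andbT; apply/subsetP => u /pa_neq /andP [ua ub].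
    by rewrite !inE ua ub.
  have [_ g_card] := dag_family g_dag (in_setT v).
  case: ifP => bv; apply/andP; split.
  + apply/subsetP => u; rewrite !inE => /predU1P [->|/andP [ub uv]].
      by rewrite eq_sym v_neq_a a_neq_b.
    by rewrite ub (g_neq _ _ uv).
  + by apply: leq_trans (g_card); rewrite cardsU1 (cardsD1 b (g v)) bv leq_add2r leq_b1.
  + apply/subsetP => u uv; rewrite !inE (g_neq _ _ uv) /=.
    by apply: contraTneq uv => ->; rewrite bv.
  + exact: g_card.
- have r'_le w : r' w <= r w by rewrite /r'; case: eqVneq => [->|]; rewrite ?geq_minl.
  have [-> {v v_neq_b}|v_neq_a] := eqVneq v a.
    by move=> /[dup] /pa_rank; rewrite /r' eqxx => u_rank /pa_neq /andP [/negbTE -> _].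
  rewrite /r' (negbTE v_neq_a); case: ifP => bv.
    rewrite !inE => /predU1P [->|/andP [_ uv]]; last exact: leq_ltn_trans (r'_le u) (g_rank _ _ uv).
    by rewrite eqxx; apply: leq_ltn_trans (geq_minr _ _) (g_rank _ _ bv).
  by move=> uv; apply: leq_ltn_trans (r'_le u) (g_rank _ _ uv).
Qed.

Lemma collapse_dag_exists k g a b : a != b -> is_dag setT k g ->
  exists2 pa, (pa == g a) || (pa == g b) & is_dag [set~ b] k (collapse g a b pa).
Proof.
move=> a_neq_b g_dag; have [r g_rank] := dag_rank g_dag.
have {}g_rank u v : u \in g v -> r u < r v by apply: g_rank; rewrite in_setT.
have card_g v : #|g v| <= k by have [] := dag_family g_dag (in_setT v).
case: (leqP (r a) (r b)) => ab_rank.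
- exists (g a); rewrite ?eqxx //; apply: (collapse_is_dag (r := r)) => // u ua.
  by have u_rank := g_rank _ _ ua; rewrite leq_min u_rank (leq_trans u_rank).
- exists (g b); rewrite ?eqxx ?orbT //; apply: (collapse_is_dag (r := r)) => // u ub.
  by have u_rank := g_rank _ _ ub; rewrite leq_min u_rank (ltn_trans u_rank).
Qed.
End Dag.

Section Score.
Variables (R : realType) (V W : finType) (P : {ffun V -> W} -> R).
Hypothesis P_ge0 : forall x, 0 <= P x.
Implicit Types (pa : {set V}) (g : {ffun V -> {set V}}) (a b v : V).

Lemma scoreT_D1 b g : score P setT g = score P [set~ b] g - condH P b (g b).
Proof. by rewrite /score (big_setD1 b) ?inE //= setTD opprD addrC. Qed.

Lemma score_le_Sstar k g : is_dag setT k g -> score P setT g <= Sstar P k.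
Proof. exact: le_bigmax_cond. Qed.

Definition add_family g b pa : {ffun V -> {set V}} := [ffun v => if v == b then pa else g v].

Lemma add_family_is_dag k g b pa : is_dag [set~ b] k g ->
  pa \subset [set~ b] -> (#|pa| <= k)%N -> is_dag setT k (add_family g b pa).
Proof.
move=> g_dag pa_sub pa_card; have [r g_rank] := dag_rank g_dag.
pose r' v := if v == b then (\max_u r u).+1 else r v.
have g_family v : v != b -> g v \subset [set~ b] :\ v /\ (#|g v| <= k)%N.
  by move=> v_neq_b; apply: (dag_family g_dag); rewrite in_setC1.
have neq_b_of u v : v != b -> u \in g v -> u != b.
  by move=> /g_family [/subsetP g_sub _] /g_sub; rewrite !inE => /andP [].
apply: (is_dag_ranked (r := r')) => [v _|u v _]; rewrite ffunE /r'.
- case: (eqVneq v b) => [->|v_neq_b]; first by rewrite pa_card andbT setTD.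
  have [g_sub ->] := g_family v v_neq_b; rewrite andbT; apply: subset_trans g_sub _.
  by apply: setSD; apply: subsetT.
- case: (eqVneq v b) => [_|v_neq_b] uv; last first.
    by rewrite (negbTE (neq_b_of u v v_neq_b uv)); apply: g_rank; rewrite ?in_setC1.
  have := subsetP pa_sub u uv; rewrite in_setC1 => /negbTE ->.
  by rewrite ltnS leq_bigmax.
Qed.

Lemma score_add_family g b pa :
  score P setT (add_family g b pa) = score P [set~ b] g - condH P b pa.
Proof.
rewrite (scoreT_D1 b) ffunE eqxx /score; congr (- _ - _).
by apply: eq_bigr => v; rewrite in_setC1 ffunE => /negbTE ->.
Qed.

Lemma score_collapse_le g a b pa lam : a != b -> (pa == g a) || (pa == g b) ->
  condH P b [set a] <= lam -> condH P a [set b] <= lam ->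
  score P setT g <= score P [set~ b] (collapse g a b pa) + #|V|.-1%:R * lam.
Proof.
move=> a_neq_b pa_eq ba_le ab_le.
have lam_ge0 : 0 <= lam by apply: le_trans ba_le; apply: condH_ge0.
have family_le v : v != b -> condH P v (collapse g a b pa v) <=
    condH P v (g v) + (v == a)%:R * condH P b (g b) + lam.
  move=> v_neq_b; rewrite ffunE.
  case: (eqVneq v a) => [->|v_neq_a] /=; rewrite ?mul1r ?mul0r ?addr0.
    have := condH_ge0 P_ge0 b (g b); have := condH_ge0 P_ge0 a (g a).
    case/orP: pa_eq => /eqP ->; last have := condH_target_swap P_ge0 a b (g b); lra.
  case: ifP => _; last lra.
  by have := condH_substitute P_ge0 v a b (g v); lra.
have sum_indicator : \sum_(v in [set~ b]) (v == a)%:R * condH P b (g b) = condH P b (g b).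
  rewrite (big_setD1 a) ?in_setC1 //= eqxx mul1r big1 ?addr0 // => v.
  by rewrite !inE => /andP [/negbTE -> _]; rewrite mul0r.
have sum_bound : \sum_(v in [set~ b]) (condH P v (g v) + (v == a)%:R * condH P b (g b) + lam) =
    \sum_(v in [set~ b]) condH P v (g v) + condH P b (g b) + #|V|.-1%:R * lam.
  by rewrite big_split big_split /= sum_indicator sumr_const cardsC1 mulr_natl.
have : \sum_(v in [set~ b]) condH P v (collapse g a b pa v) <=
    \sum_(v in [set~ b]) (condH P v (g v) + (v == a)%:R * condH P b (g b) + lam).
  by apply: ler_sum => v; rewrite in_setC1; apply: family_le.
by rewrite sum_bound (scoreT_D1 b) /score; lra.
Qed.
End Score.

Theorem lemma9 (R : realType) (V W : finType) (k : nat) (a b : V)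
  (P : {ffun V -> W} -> R) (Q : {ffun V -> W} -> bool -> R)
  (alpha beta lambda : R) (G : {ffun V -> {set V}}) :
  (0 < k)%N ->
  (* X_1 = V \ {X_b}, contains X_a, has at least k variables *)
  a != b ->
  (k <= #|[set~ b]|)%N ->
  0 < alpha -> 0 < beta ->
  (* (I) unique optimal EC (represented by G0) with gap beta, and
     (II) X_a has no children in any structure of that EC *)
  (exists G0 : {ffun V -> {set V}},
     [/\ is_dag [set~ b] k G0,
         (forall G', is_dag [set~ b] k G' ->
            score P [set~ b] G' <= score P [set~ b] G0),
         (forall G', is_dag [set~ b] k G' -> ~ markov_equiv [set~ b] G' G0 ->
            score P [set~ b] G' <= score P [set~ b] G0 - beta) &
         (forall G', is_dag [set~ b] k G' -> markov_equiv [set~ b] G' G0 ->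
            forall v, v \in [set~ b] -> a \notin G' v)]) ->
  (* (III) *)
  condH P a ([set~ b] :\ a) = alpha ->
  (* lambda in (0, min(alpha, beta/(3d))) *)
  0 < lambda -> lambda < alpha -> lambda < beta / (3 * #|V|%:R) ->
  (* (IV) joint law Q of (X, C), C a hidden Bernoulli variable; P is the X-marginal *)
  (forall x c, 0 <= Q x c) ->
  \sum_(x : {ffun V -> W}) \sum_(c : bool) Q x c = 1 ->
  (forall x, P x = Q x true + Q x false) ->
  (* C independent of X_1 *)
  (forall (u : {ffun V -> W}) (c : bool),
     \sum_(x : {ffun V -> W} | agree [set~ b] x u) Q x c =
     (\sum_(x : {ffun V -> W} | agree [set~ b] x u) P x) * (\sum_(x : {ffun V -> W}) Q x c)) ->
  (* P[X_b = X_a | C = 1] = 1 *)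
  \sum_(x : {ffun V -> W} | x b != x a) Q x true = 0 ->
  (* X_b independent of X_1 given C = 0 *)
  (forall (u : {ffun V -> W}) (w : W),
     (\sum_(x : {ffun V -> W} | agree [set~ b] x u && (x b == w)) Q x false) *
       (\sum_(x : {ffun V -> W}) Q x false) =
     (\sum_(x : {ffun V -> W} | agree [set~ b] x u) Q x false) *
       (\sum_(x : {ffun V -> W} | x b == w) Q x false)) ->
  (* (V) *)
  Num.max (condH P b [set a]) (condH P a [set b]) = lambda ->
  (* G in G_{d,k}, and X_a or X_b has a child other than X_a, X_b *)
  is_dag setT k G ->
  (exists y, [/\ y != a, y != b & (a \in G y) || (b \in G y)]) ->
  score P setT G < Sstar P k - beta + 3 * #|V|%:R * lambda.
Proof.
move=> k_gt0 a_neq_b _ _ _ [G0 [G0_dag _ G0_gap G0_class]] _ lam_gt0 _ _ Q_ge0 _ P_Q _ _ _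
  lam_max G_dag [y [y_neq_a y_neq_b y_child]].
have P_ge0 x : 0 <= P x by rewrite P_Q addr_ge0.
have ba_le : condH P b [set a] <= lambda by rewrite -lam_max le_max lexx.
have ab_le : condH P a [set b] <= lambda by rewrite -lam_max le_max lexx orbT.
have [pa pa_eq G'_dag] := collapse_dag_exists a_neq_b G_dag.
have G_le := score_collapse_le P_ge0 a_neq_b pa_eq ba_le ab_le.
have G'_not_opt : ~ markov_equiv [set~ b] (collapse G a b pa) G0.
  move=> G'_equiv; have := G0_class _ G'_dag G'_equiv y.
  by rewrite in_setC1 y_neq_b collapse_parent // => /(_ isT).
have G'_le := G0_gap _ G'_dag G'_not_opt.
have G0_le : score P [set~ b] G0 - condH P b [set a] <= Sstar P k.
  rewrite -score_add_family; apply/score_le_Sstar/add_family_is_dag => //.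
  - by rewrite sub1set in_setC1.
  - by rewrite cards1.
have d_ge1 : (1 <= #|V|)%N by apply/card_gt0P; exists a.
have d_pred : #|V|.-1%:R = #|V|%:R - 1 :> R by rewrite -subn1 natrB.
have : 1 <= #|V|%:R :> R by rewrite ler1n.
rewrite d_pred in G_le; nra.
Qed.
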